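(* Let $G$ be a bipartite permutation graph and let $M$ be a matching in $G$. The following are equivalent: (i) $M$ is uniquely restricted; (ii) there is no alternating cycle of length 4 with respect to $M$ in $G$; (iii) for any two edges $e,e'\in M$, $\{e,e'\}$ is a uniquely restricted matching in $G$.
   Context: Graphs are finite, simple, undirected. For a permutation $\pi$ of $\{1,\dots,n\}$, $G_\pi$ has vertex set $\{1,\dots,n\}$ and edges $ij$ with $(i-j)(\pi(i)-\pi(j))<0$; a permutation graph is a graph isomorphic to some $G_\pi$, and a bipartite permutation graph is a bipartite permutation graph. A matching is a set of pairwise vertex-disjoint edges; it is uniquely restricted if no other matching of $G$ matches exactly the same vertex set. An alternating cycle with respect to $M$ is an even cycle of $G$ in which every second edge belongs to $M$. *)

From mathcomp Require Import all_boot all_order all_algebra all_fingroup.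
Set Implicit Arguments. Unset Strict Implicit. Unset Printing Implicit Defensive.
Import Order.TTheory GRing.Theory Num.Theory.

(* A finite simple graph on vertex type T is a symmetric irreflexive e : rel T.
   Edges are the 2-element vertex sets {x, y} with e x y. *)

Definition is_edge (T : finType) (e : rel T) (s : {set T}) : bool :=
  [exists x, exists y, e x y && (s == [set x; y])].

(* G_pi on vertex set {0,...,n-1} (0-based indexing of {1,...,n}). *)
Definition perm_edge (n : nat) (p : 'S_n) (i j : 'I_n) : bool :=
  (((i : nat)%:Z - (j : nat)%:Z) * (((p i : nat)%:Z) - ((p j : nat)%:Z)) < 0)%R.

Definition permutation_graph (T : finType) (e : rel T) : Prop :=
  exists (n : nat) (p : 'S_n) (f : T -> 'I_n),
    bijective f /\ forall x y, e x y = perm_edge p (f x) (f y).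

Definition bipartite (T : finType) (e : rel T) : Prop :=
  exists A : {set T}, forall x y, e x y -> (x \in A) != (y \in A).

Definition matching (T : finType) (e : rel T) (M : {set {set T}}) : Prop :=
  (forall s, s \in M -> is_edge e s) /\
  (forall s t, s \in M -> t \in M -> s != t -> [disjoint s & t]).

Definition uniquely_restricted (T : finType) (e : rel T) (M : {set {set T}}) : Prop :=
  matching e M /\
  forall M', matching e M' -> cover M' = cover M -> M' = M.

Definition alt_cycle4 (T : finType) (e : rel T) (M : {set {set T}}) : Prop :=
  exists a b c d : T,
    [/\ uniq [:: a; b; c; d],
        [&& e a b, e b c, e c d & e d a],
        [set a; b] \in M & [set c; d] \in M].

From mathcomp Require Import all_boot all_order all_algebra all_fingroup.
From mathcomp Require Import zify.
Set Implicit Arguments. Unset Strict Implicit. Unset Printing Implicit Defensive.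

(* An alternating 4-cycle a-b-c-d lets one trade the matching edges ab, cd for
   bc, da, which gives another matching on the same vertex set; so (i) implies
   (ii) and, applied to the matching {ab, cd}, (iii) implies (ii).  Conversely
   (ii) is inherited by the submatchings {s, t}, so (ii) implies (iii) once
   (ii) implies (i).

   For (ii) => (i), put vertex v at the point (X v, Y v) = (i, pi i) of the
   permutation diagram, so that edges are exactly the inversions.  Bipartiteness
   forbids two chained inversions, so every vertex is the left ("source") end of
   all its edges or the right ("sink") end of all of them, and sources, like
   sinks, are sorted alike by X and by Y.  Hence the strong ordering property:
   if the edges t1-b2 and t2-b1 cross (X t1 <= X t2, X b1 <= X b2), then t1-b1
   and t2-b2 are edges too.  Now let M' <> M cover the same vertices, and take
   the edge u-l of M \ M' whose source u is leftmost.  The M'-edges at u and at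
   l end at a sink a and a source k lying on edges ta-a and k-bk of M \ M',
   with u left of ta and of k; comparing a with l, ta with k and a with bk, one
   of these crossings always closes an alternating 4-cycle. *)

Lemma bipartite_no_triangle (T : finType) (e : rel T) x y z :
  bipartite e -> e x y -> e y z -> e x z -> False.
Proof.
move=> [A sideA] /sideA xy /sideA yz /sideA xz.
by move: xy yz xz; case: (x \in A); case: (y \in A); case: (z \in A).
Qed.

Section Matchings.
Variables (T : finType) (e : rel T).
Hypothesis e_sym : symmetric e.

Lemma is_edge_pair x y : e x y -> is_edge e [set x; y].
Proof.
by move=> exy; apply/existsP; exists x; apply/existsP; exists y; rewrite exy eqxx.
Qed.

Lemma is_edge_mem s v : is_edge e s -> v \in s -> exists2 w, s = [set v; w] & e v w.
Proof.
move=> /existsP [x /existsP [y /andP [exy /eqP ->]]] /set2P [] ->; first by exists y.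
by exists x; rewrite 1?setUC // e_sym.
Qed.

Lemma cover_pair (A B : {set T}) : cover [set A; B] = A :|: B.
Proof. by rewrite /cover bigcup_setU !big_set1. Qed.

Lemma matching_eq_edge M s t x : matching e M -> s \in M -> t \in M ->
  x \in s -> x \in t -> s = t.
Proof.
move=> [_ disjM] sM tM xs xt; apply/eqP; apply: contraTT xt => st.
by rewrite (disjointFr (disjM s t sM tM st) xs).
Qed.

Lemma matching_subset (M N : {set {set T}}) : matching e M -> N \subset M -> matching e N.
Proof.
move=> [edgeM disjM] /subsetP NM; split=> [s /NM | s t /NM sM /NM tM]; first exact: edgeM.
exact: disjM.
Qed.

Lemma matching_pair s t : is_edge e s -> is_edge e t -> [disjoint s & t] ->
  matching e [set s; t].
Proof.
move=> es et st; split=> [r /set2P [] -> // | r r' /set2P [] -> /set2P [] ->];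
  by rewrite ?eqxx // disjoint_sym.
Qed.

Lemma matching_exchange (M P Q : {set {set T}}) :
  matching e M -> P \subset M -> matching e Q -> cover Q = cover P ->
  matching e ((M :\: P) :|: Q) /\ cover ((M :\: P) :|: Q) = cover M.
Proof.
move=> [edgeM disjM] PM [edgeQ disjQ] covQ.
have disj_new s q : s \in M :\: P -> q \in Q -> [disjoint s & q].
  move=> /setDP [sM sP] qQ; apply: disjointWr (bigcup_sup q qQ) _.
  rewrite -/(cover Q) covQ; apply: bigcup_disjoint => p pP.
  by apply: disjM sM (subsetP PM p pP) _; apply: contraNneq sP => ->.
split; last first.
  rewrite /cover bigcup_setU -/(cover Q) covQ -bigcup_setU.
  by rewrite setUC -{1}(setIidPr PM) setID.
split=> [s /setUP [/setDP [sM _] | sQ] | s t /setUP [sD | sQ] /setUP [tD | tQ]].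
- exact: edgeM.
- exact: edgeQ.
- by move: sD tD => /setDP [sM _] /setDP [tM _]; exact: disjM.
- by move=> _; exact: disj_new.
- by move=> _; rewrite disjoint_sym; exact: disj_new.
- exact: disjQ.
Qed.

Lemma alt_cycle4_subset (N M : {set {set T}}) :
  N \subset M -> alt_cycle4 e N -> alt_cycle4 e M.
Proof.
move=> /subsetP NM [a [b [c [d [abcd cyc /NM abM /NM cdM]]]]].
by exists a, b, c, d.
Qed.

Lemma alt_cycle4_not_uniquely_restricted M :
  matching e M -> alt_cycle4 e M -> ~ uniquely_restricted e M.
Proof.
move=> matM [a [b [c [d [abcd /and4P [eab ebc ecd eda] abM cdM]]]]] [_ urM].
move: abcd; rewrite /= !inE !negb_or -!andbA andbT.
move=> /and5P [ab ac ad bc /andP [bd cd]].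
set P := [set [set a; b]; [set c; d]]; set Q := [set [set b; c]; [set d; a]].
have PM : P \subset M by rewrite subUset !sub1set abM cdM.
have matQ : matching e Q.
  apply: matching_pair; rewrite ?is_edge_pair //.
  rewrite disjoint_subset; apply/subsetP => x /set2P [] ->; rewrite !inE negb_or.
    by rewrite bd eq_sym ab.
  by rewrite cd eq_sym ac.
have covQ : cover Q = cover P.
  apply/setP => x; rewrite !cover_pair !inE.
  by case: (x == a); case: (x == b); case: (x == c); case: (x == d).
have [matM' covM'] := matching_exchange matM PM matQ covQ.
have bcM : [set b; c] \in M.
  by rewrite -(urM _ matM' covM'); apply/setUP; right; rewrite !inE eqxx.
have := matching_eq_edge matM abM bcM (x := b); rewrite !inE !eqxx orbT.
move=> /(_ isT isT) /setP /(_ c); rewrite !inE eqxx orbT.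
by rewrite eq_sym (negbTE ac) eq_sym (negbTE bc).
Qed.

Lemma matching_subset_cover_eq (M M' : {set {set T}}) :
  matching e M' -> M \subset M' -> cover M' = cover M -> M' = M.
Proof.
move=> matM' MM' covM; apply/eqP; rewrite eqEsubset; apply/andP; split=> //.
apply/subsetP => s sM'.
have /existsP [x /existsP [y /andP [_ /eqP sxy]]] := matM'.1 s sM'.
have xs : x \in s by rewrite sxy !inE eqxx.
have /bigcupP [r rM xr] : x \in cover M by rewrite -covM; apply/bigcupP; exists s.
by rewrite (matching_eq_edge matM' sM' (subsetP MM' r rM) xs xr).
Qed.

Lemma cover_eq_partner M M' s v : matching e M -> matching e M' ->
  cover M' = cover M -> s \in M :\: M' -> v \in s ->
  exists w r, [/\ [set v; w] \in M' :\: M, e v w, r \in M :\: M' & w \in r].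
Proof.
move=> matM matM' covM /setDP [sM sM'] vs.
have /bigcupP [s' s'M' vs'] : v \in cover M' by rewrite covM; apply/bigcupP; exists s.
have [w s'E evw] := is_edge_mem (matM'.1 s' s'M') vs'.
have s'M : s' \notin M.
  by apply: contra sM' => s'M; rewrite (matching_eq_edge matM sM s'M vs vs').
have ws' : w \in s' by rewrite s'E !inE eqxx orbT.
have /bigcupP [r rM wr] : w \in cover M by rewrite -covM; apply/bigcupP; exists s'.
exists w, r; rewrite -s'E !inE s'M s'M' rM !andbT; split=> //.
apply: contra s'M => rM'.
by rewrite -(matching_eq_edge matM' rM' s'M' wr ws').
Qed.
End Matchings.

Definition inversion (T : Type) (X Y : T -> nat) (x y : T) : bool :=
  (X x < X y) && (Y y < Y x).

Lemma inversion_trans (T : Type) (X Y : T -> nat) : transitive (inversion X Y).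
Proof.
move=> y x z /andP [Xxy Yyx] /andP [Xyz Yzy].
by rewrite /inversion (ltn_trans Xxy Xyz) (ltn_trans Yzy Yyx).
Qed.

Lemma permutation_graph_inversions (T : finType) (e : rel T) :
  permutation_graph e -> exists X Y : T -> nat,
    injective X /\ forall x y, e x y = inversion X Y x y || inversion X Y y x.
Proof.
move=> [n [p [f [f_bij eE]]]].
exists (fun v => nat_of_ord (f v)), (fun v => nat_of_ord (p (f v))); split.
- by move=> x y /val_inj /(bij_inj f_bij).
- by move=> x y; rewrite eE /perm_edge /inversion; apply/idP/idP; nia.
Qed.

Section Inversions.
Variables (T : finType) (e : rel T) (X Y : T -> nat).
Hypothesis X_inj : injective X.
Local Notation inv := (inversion X Y).
Hypothesis eE : forall x y, e x y = inv x y || inv y x.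
Hypothesis inv_chain : forall x y z, inv x y -> inv y z -> False.

Lemma inv_irr x : inv x x = false.
Proof. by rewrite /inversion ltnn. Qed.

Lemma is_edge_inv s : is_edge e s -> exists t b, s = [set t; b] /\ inv t b.
Proof.
move=> /existsP [x /existsP [y /andP [exy /eqP ->]]].
by move: exy; rewrite eE => /orP [xy | yx]; [exists x, y | exists y, x; rewrite setUC].
Qed.

Lemma inv_source_le t1 t2 b : inv t2 b -> X t1 <= X t2 -> Y t1 <= Y t2.
Proof.
move=> t2b; rewrite leq_eqVlt => /orP [/eqP /X_inj -> // | Xt12].
have : ~~ inv t1 t2 by apply/negP => t12; exact: inv_chain t12 t2b.
by rewrite /inversion Xt12 -leqNgt.
Qed.

Lemma inv_sink_le b1 b2 t : inv t b1 -> X b1 <= X b2 -> Y b1 <= Y b2.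
Proof.
move=> tb1; rewrite leq_eqVlt => /orP [/eqP /X_inj -> // | Xb12].
have : ~~ inv b1 b2 by apply/negP => b12; exact: inv_chain tb1 b12.
by rewrite /inversion Xb12 -leqNgt.
Qed.

Lemma inv_cross t1 t2 b1 b2 : inv t1 b2 -> inv t2 b1 ->
  X t1 <= X t2 -> X b1 <= X b2 -> inv t1 b1 && inv t2 b2.
Proof.
move=> t1b2 t2b1 Xt Xb.
have Yt := inv_source_le t2b1 Xt; have Yb := inv_sink_le t2b1 Xb.
by move: t1b2 t2b1; rewrite /inversion; lia.
Qed.

Let e_sym : symmetric e.
Proof. by move=> x y; rewrite !eE orbC. Qed.

Section NoAltCycle.
Variables M M' : {set {set T}}.
Hypotheses (matM : matching e M) (matM' : matching e M') (covM : cover M' = cover M).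

Lemma alt_cycle4_inv t1 b1 t2 b2 : [set t1; b1] \in M -> [set t2; b2] \in M ->
  t1 != t2 -> inv t1 b1 -> inv t2 b2 -> inv t1 b2 -> inv t2 b1 -> alt_cycle4 e M.
Proof.
move=> e1M e2M t12 tb1 tb2 tb12 tb21.
have e12 : [set t1; b1] != [set t2; b2].
  apply: contraNneq t12 => E; have : t1 \in [set t2; b2] by rewrite -E !inE eqxx.
  case/set2P=> [-> // | t1b2].
  by move: tb2; rewrite -t1b2 => /inv_chain /(_ tb1).
have notin x : x \in [set t1; b1] -> x \notin [set t2; b2].
  by move=> x1; rewrite (disjointFr (matM.2 _ _ e1M e2M e12) x1).
exists t1, b1, t2, b2; split=> //; last by rewrite !eE tb1 tb2 tb12 tb21 !orbT.
move: (notin t1) (notin b1); rewrite /= !inE !eqxx ?orbT !negb_or.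
move=> /(_ isT) /andP [-> ->] /(_ isT) /andP [-> ->].
have ne x y : inv x y -> x != y by apply: contraTneq => ->; rewrite inv_irr.
by rewrite !ne.
Qed.

Lemma alt_cycle4_cross t1 t2 b1 b2 : [set t1; b2] \in M -> [set t2; b1] \in M ->
  t1 != t2 -> inv t1 b2 -> inv t2 b1 -> X t1 <= X t2 -> X b1 <= X b2 ->
  alt_cycle4 e M.
Proof.
move=> e1M e2M t12 tb12 tb21 Xt Xb.
have /andP [tb1 tb2] := inv_cross tb12 tb21 Xt Xb.
exact: alt_cycle4_inv e1M e2M t12 tb12 tb21 tb1 tb2.
Qed.

Lemma exists_leftmost_diff_edge : M :\: M' != set0 ->
  exists u l, [/\ [set u; l] \in M :\: M', inv u l &
    forall t b, [set t; b] \in M :\: M' -> inv t b -> X u <= X t].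
Proof.
case/set0Pn=> s sD; have /setDP [sM _] := sD.
have [t0 [b0 [s_tb inv0]]] := is_edge_inv (matM.1 s sM).
pose P x := [exists y, ([set x; y] \in M :\: M') && inv x y].
have P_t0 : P t0 by apply/existsP; exists b0; rewrite -s_tb sD inv0.
case: (arg_minnP X P_t0) => u /existsP [l /andP [ulD ul]] u_min.
exists u, l; split=> // t b tbD tb; apply: u_min.
by apply/existsP; exists b; rewrite tbD tb.
Qed.

Lemma source_partner u l : [set u; l] \in M :\: M' -> inv u l ->
  exists t a, [/\ [set t; a] \in M :\: M', inv t a, inv u a & u != t].
Proof.
move=> ulD ul.
have [a [r [uaD eua rD ar]]] :=
  cover_eq_partner e_sym matM matM' covM ulD (setU11 u _).
have ua : inv u a by move: eua; rewrite eE => /orP [// | /inv_chain /(_ ul)].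
have [t [b [rE tb]]] := is_edge_inv (matM.1 r (setDP rD).1).
have ab : a = b.
  move: ar; rewrite rE => /set2P [a_t | //].
  by move: ua; rewrite a_t => /inv_chain /(_ tb).
subst a; exists t, b; rewrite -rE; split=> //.
apply: contraTneq uaD => tu; rewrite !inE negb_and negbK.
by rewrite tu -rE (setDP rD).1.
Qed.

Lemma sink_partner u l : [set u; l] \in M :\: M' -> inv u l ->
  exists k b, [/\ [set k; b] \in M :\: M', inv k b, inv k l & u != k].
Proof.
move=> ulD ul.
have [k [r [lkD elk rD kr]]] :=
  cover_eq_partner e_sym matM matM' covM ulD (setU1r _ (set11 l)).
have kl : inv k l by move: elk; rewrite eE => /orP [/(inv_chain ul) // | //].
have [t [b [rE tb]]] := is_edge_inv (matM.1 r (setDP rD).1).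
have kt : k = t.
  move: kr; rewrite rE => /set2P [// | kb].
  by move: kl; rewrite kb => /(inv_chain tb).
subst k; exists t, b; rewrite -rE; split=> //.
apply: contraTneq lkD => ku; rewrite !inE negb_and negbK.
by rewrite -ku setUC (setDP ulD).1.
Qed.

Lemma no_alt_cycle4_cover_eq : ~ alt_cycle4 e M -> M' = M.
Proof.
move=> noC; apply/eqP/negPn/negP => neq; apply: noC.
have : M :\: M' != set0.
  apply: contra neq; rewrite setD_eq0 => MM'.
  by rewrite (matching_subset_cover_eq matM' MM' covM).
move=> /exists_leftmost_diff_edge [u [l [ulD ul u_min]]].
have [ta [a [taD taa ua ta_u]]] := source_partner ulD ul.
have [k [bk [kD kbk kl k_u]]] := sink_partner ulD ul.
have [ulM taM kM] := And3 (setDP ulD).1 (setDP taD).1 (setDP kD).1.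
have [u_ta u_k] := (u_min _ _ taD taa, u_min _ _ kD kbk).
have [al | la] := leqP (X a) (X l).
  exact: alt_cycle4_cross ulM taM ta_u ul taa u_ta al.
have [ta_k | k_ta] := leqP (X ta) (X k).
  have /andP [tal _] := inv_cross taa kl ta_k (ltnW la).
  exact: alt_cycle4_inv ulM taM ta_u ul taa ua tal.
have k_ta' : k != ta by apply: contraTneq k_ta => ->; rewrite ltnn.
have [abk | bka] := leqP (X a) (X bk).
  exact: alt_cycle4_cross kM taM k_ta' kbk taa (ltnW k_ta) abk.
have /andP [ubk _] := inv_cross ua kbk u_k (ltnW bka).
exact: alt_cycle4_inv ulM kM k_u ul kbk ubk kl.
Qed.
End NoAltCycle.

Lemma no_alt_cycle4_uniquely_restricted M :
  matching e M -> ~ alt_cycle4 e M -> uniquely_restricted e M.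
Proof.
move=> matM noC; split=> // M' matM' covM.
exact: no_alt_cycle4_cover_eq matM matM' covM noC.
Qed.
End Inversions.

Theorem theorem5 (T : finType) (e : rel T) (M : {set {set T}}) :
  symmetric e -> irreflexive e ->
  permutation_graph e -> bipartite e ->
  matching e M ->
  (uniquely_restricted e M <-> ~ alt_cycle4 e M) /\
  (~ alt_cycle4 e M <->
     (forall s t, s \in M -> t \in M -> uniquely_restricted e [set s; t])).
Proof.
(* symmetry and irreflexivity of [e] already follow from [permutation_graph e] *)
move=> _ _ /permutation_graph_inversions [X [Y [X_inj eE]]] bip matM.
have inv_chain x y z : inversion X Y x y -> inversion X Y y z -> False.
  move=> xy yz; apply: (bipartite_no_triangle (x := x) (y := y) (z := z) bip);
  by rewrite eE ?xy ?yz ?(inversion_trans xy yz).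
have ur := no_alt_cycle4_uniquely_restricted X_inj eE inv_chain.
split; split.
- by move=> urM /(alt_cycle4_not_uniquely_restricted matM); apply.
- exact: ur.
- move=> noC s t sM tM.
  have stM : [set s; t] \subset M by rewrite subUset !sub1set sM tM.
  by apply: ur (matching_subset matM stM) _ => /(alt_cycle4_subset stM).
- move=> ur2 [a [b [c [d [abcd cyc abM cdM]]]]].
  have ur_abcd := ur2 _ _ abM cdM.
  apply: alt_cycle4_not_uniquely_restricted ur_abcd.1 _ ur_abcd.
  by exists a, b, c, d; rewrite !inE !eqxx ?orbT.
Qed.
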